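(* Let $\varphi$ be a basic existential or basic universal sentence of spread $m$ and range $r'$ over a graph language $L$, and let $C,M\notin L$ be distinct unary predicate symbols. Let $G$ be an $L$-interpretation with $G\models\varphi$, and let $\lambda$ be a layering of $\overline G$. Let $r\ge r'$ and $\ell>2r(3m+1)$ be integers. Then for all but at most $6rm$ of the $(\ell,r)$-covers of integers $R$, there exists an $m$-plan $p$ for $R$ such that for each $I\in R$, $$G[\lambda^{-1}(I)],\ C:=\lambda^{-1}(M_{2r}(I)),\ M:=\lambda^{-1}(M_r(I))\models\varphi^{(p(I))}.$$
   Context: A graph language $L$ consists of a binary predicate symbol $e$ and a finite set of unary predicate symbols. An $L$-interpretation $G$ consists of a graph $\overline G$ and a set $S_C\subseteq V(\overline G)$ for each unary $C\in L$; $e$ is interpreted as adjacency in $\overline G$. For $S\subseteq V(\overline G)$, $G[S]$ is the interpretation on $\overline G[S]$ with each unary predicate restricted to $S$; ''$H, C:=A, M:=B$'' denotes the expansion of $H$ with new unary predicates $C,M$ interpreted as $A,B$. A layering of a graph is a function $\lambda:V\to\mathbb Z$ with $|\lambda(u)-\lambda(v)|\le1$ on edges. $d(x,y)\le r$ abbreviates $(\exists z_0,\dots,z_r)\,z_0=x\land z_r=y\land\bigwedge_{i=1}^r(z_{i-1}=z_i\lor e(z_{i-1},z_i))$. An $r$-local formula is a formula $\psi$ with one free variable $x$ in which all quantifications are of the form $(\exists y: d(x,y)\le r)$ or $(\forall y: d(x,y)\le r)$. A basic existential sentence is one of the form $(\exists x_1,\dots,x_m)\bigwedge_{1\le i<j\le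 m}d(x_i,x_j)>2r\land\bigwedge_{i=1}^m\psi(x_i)$, and a basic universal sentence is one of the form $(\forall x_1,\dots,x_{m+1})\bigl(\bigwedge_{1\le i<j\le m+1}d(x_i,x_j)>2r\bigr)\Rightarrow\bigvee_{i=1}^{m+1}\psi(x_i)$, where in both cases $\psi$ is $r$-local; $m$ is the spread, $r$ the range and $\psi$ the core. For such $\varphi$ and an integer $k\ge0$, the $(C,M,k)$-variant $\varphi^{(k)}$ is $(\exists x_1,\dots,x_k)\bigwedge_{1\le i<j\le k}d(x_i,x_j)>2r\land\bigwedge_{i=1}^k(C(x_i)\land\psi(x_i))$ if $\varphi$ is basic existential, and $(\forall x_1,\dots,x_{k+1})\bigl(\bigwedge_{i=1}^{k+1}M(x_i)\land\bigwedge_{1\le i<j\le k+1}d(x_i,x_j)>2r\bigr)\Rightarrow\bigvee_{i=1}^{k+1}\psi(x_i)$ if $\varphi$ is basic universal. For integers $\ell\ge 2r+1$ and $n$, the set of all intervals $\{i,i+1,\dots,i+\ell-1\}$ with $i\equiv n\pmod{\ell-2r}$ is an $(\ell,r)$-cover of integers (there are exactly $\ell-2r$ distinct ones). For an integer $d\ge0$ and $I=\{i,\dots,i+\ell-1\}$ in a cover, $M_d(I)=\{i+d,\dots,i+\ell-d-1\}$. An $m$-plan for a cover $R$ is a function $p:R\to\mathbb Z_{\ge0}$ with $\sum_{I\in R}p(I)=m$. *)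

From mathcomp Require Import all_boot all_order all_algebra.
Set Implicit Arguments. Unset Strict Implicit. Unset Printing Implicit Defensive.
Import Order.TTheory GRing.Theory Num.Theory.
Local Open Scope ring_scope.

(* An L-interpretation is given by a finite vertex type V, an adjacency
   relation [adj] (the graph, symmetric and irreflexive) and the interpretation
   [lab c] of each unary predicate symbol c (symbols are natural numbers).
   An induced sub-interpretation G[S] is represented by restricting the
   domain of quantification to S : {set V} (edges and unary predicates are then
   automatically restricted to S, since they are only ever evaluated at
   elements of S). *)

(* Semantics of the formula  d(x,y) <= n  in the interpretation with domain D:
   exists z_0..z_n in D with z_0 = x, z_n = y and z_{i-1} = z_i \/ e(z_{i-1},z_i). *)
Fixpoint dle (V : finType) (adj : rel V) (D : {set V}) (n : nat) (x y : V) : Prop :=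
  match n with
  | 0 => x = y
  | n'.+1 => exists z, z \in D /\ dle adj D n' x z /\ (z = y \/ adj z y)
  end.

(* Syntax of r-local formulas with the single free variable x.
   Terms: the free variable x ([LX]) or a bound variable (de Bruijn index).
   [LExB f] is (exists y : d(x,y) <= r) f, [LAllB f] is (forall y : d(x,y) <= r) f,
   where y is the new bound variable (index 0). *)
Inductive lterm := LX | LB of nat.

Inductive lform :=
| LTrue | LFalse
| LEq of lterm & lterm
| LAdj of lterm & lterm
| LLab of nat & lterm
| LNot of lform
| LAnd of lform & lform
| LOr of lform & lform
| LExB of lform
| LAllB of lform.

Definition leval (V : Type) (x : V) (env : seq V) (t : lterm) : V :=
  match t with LX => x | LB n => nth x env n end.

Fixpoint lsat (V : finType) (adj : rel V) (lab : nat -> {set V}) (D : {set V})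
    (r : nat) (x : V) (env : seq V) (f : lform) : Prop :=
  match f with
  | LTrue => True
  | LFalse => False
  | LEq t u => leval x env t = leval x env u
  | LAdj t u => adj (leval x env t) (leval x env u)
  | LLab c t => leval x env t \in lab c
  | LNot g => ~ lsat adj lab D r x env g
  | LAnd g h => lsat adj lab D r x env g /\ lsat adj lab D r x env h
  | LOr g h => lsat adj lab D r x env g \/ lsat adj lab D r x env h
  | LExB g => exists y, y \in D /\ dle adj D r x y /\ lsat adj lab D r x (y :: env) g
  | LAllB g => forall y, y \in D -> dle adj D r x y -> lsat adj lab D r x (y :: env) g
  end.

Definition core_sat (V : finType) (adj : rel V) (lab : nat -> {set V}) (D : {set V})
    (r : nat) (psi : lform) (x : V) : Prop := lsat adj lab D r x [::] psi.

Definition basic_sat (V : finType) (adj : rel V) (lab : nat -> {set V}) (D : {set V})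
    (ex : bool) (m r : nat) (psi : lform) : Prop :=
  if ex then
    exists xs : 'I_m -> V,
      (forall i, xs i \in D) /\
      (forall i j : 'I_m, (i < j)%N -> ~ dle adj D (2 * r) (xs i) (xs j)) /\
      (forall i, core_sat adj lab D r psi (xs i))
  else
    forall xs : 'I_m.+1 -> V,
      (forall i, xs i \in D) ->
      (forall i j : 'I_m.+1, (i < j)%N -> ~ dle adj D (2 * r) (xs i) (xs j)) ->
      exists i, core_sat adj lab D r psi (xs i).

(* Satisfaction of the (C,M,k)-variant of the basic sentence, in the expansion of the
   interpretation with domain D by C := Cs and M := Ms. *)
Definition variant_sat (V : finType) (adj : rel V) (lab : nat -> {set V}) (D : {set V})
    (Cs Ms : {set V}) (ex : bool) (r : nat) (psi : lform) (k : nat) : Prop :=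
  if ex then
    exists xs : 'I_k -> V,
      (forall i, xs i \in D) /\
      (forall i j : 'I_k, (i < j)%N -> ~ dle adj D (2 * r) (xs i) (xs j)) /\
      (forall i, xs i \in Cs /\ core_sat adj lab D r psi (xs i))
  else
    forall xs : 'I_k.+1 -> V,
      (forall i, xs i \in D) ->
      (forall i, xs i \in Ms) ->
      (forall i j : 'I_k.+1, (i < j)%N -> ~ dle adj D (2 * r) (xs i) (xs j)) ->
      exists i, core_sat adj lab D r psi (xs i).

Definition layering (V : finType) (adj : rel V) (lam : V -> int) : Prop :=
  forall u v, adj u v -> `|lam u - lam v| <= 1.

(* lam^{-1}(M_d(I)) for I = {i, ..., i + l - 1}, i.e. vertices with layer in
   {i + d, ..., i + l - d - 1}; d = 0 gives lam^{-1}(I). *)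
Definition layer_set (V : finType) (lam : V -> int) (i : int) (l d : nat) : {set V} :=
  [set v | (i + d%:Z <= lam v) && (lam v <= i + l%:Z - d%:Z - 1)].

(* An m-plan for the cover whose intervals are indexed by q : int
   (interval number q starts at n + q (l - 2r)): a finitely supported
   function p : int -> nat with total sum m. *)
Definition is_plan (m : nat) (p : int -> nat) : Prop :=
  exists s : seq int, uniq s /\ (forall q, q \notin s -> p q = 0%N) /\
    (\sum_(q <- s) p q)%N = m.

From mathcomp Require Import all_boot all_order all_algebra.
From mathcomp Require Import zify.
From Stdlib Require Import Classical.
Import Order.TTheory GRing.Theory Num.Theory.
Set Implicit Arguments. Unset Strict Implicit. Unset Printing Implicit Defensive.
Local Open Scope ring_scope.

(* Write w = l - 2r; the (l, r)-covers are indexed by n : 'I_w, interval q of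
   cover n starting at n + q w, and its parts M_r, M_2r are the windows one
   reaches by cutting r resp. 2r layers off each end.
   - Existential case: the m witnesses of phi are pairwise at distance > 2r'.
     Assign each witness x to the interval whose first w layers contain it;
     cover n is bad if some witness falls outside M_2r of its interval (at
     most 2rm covers).  Otherwise each witness lies in M_2r of its interval,
     and the plan p(q) = number of witnesses in interval q works, as
     r'-local facts about vertices of M_r are the same in G and in the
     subinterpretation G[lam^{-1}(I)].
   - Universal case: take a scattered set X of non-psi vertices of maximum
     size; G |= phi forces #|X| <= m.  A cover is bad if some x in X falls
     outside M_3r of its interval (at most 4rm covers).  Otherwise p(q) = #|X in interval q| (+ m - #|X| on interval 0) works:
     p(q) + 1 far non-psi vertices in M_r of interval q, together with the
     elements of X outside interval q, would be a larger such set than X.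
   Since 4rm <= 6rm and 2r < l, this gives the theorem. *)

Section Distance.
Variables (V : finType) (adj : rel V).
Implicit Types (D : {set V}) (k : nat) (x y u v w : V).

Lemma dle_sub D D' k x y : D \subset D' -> dle adj D k x y -> dle adj D' k x y.
Proof.
move=> sDD'; elim: k y => [|k IH] y //= [z [zD [Hxz Hzy]]].
by exists z; split; [exact: (subsetP sDD')|split; first exact: IH].
Qed.

Lemma dle_refl D k x : x \in D -> dle adj D k x x.
Proof. by move=> xD; elim: k => [|k IH] //=; exists x; split => //; split => //; left. Qed.

Lemma dle_concat D (a b : nat) u w v :
  dle adj D a u w -> dle adj D b w v -> dle adj D (a + b) u v.
Proof.
elim: b v => [|b IH] v; first by rewrite addn0 /= => H <-.
rewrite addnS /= => Huw [z [zD [Hwz Hzv]]].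
by exists z; split => //; split => //; exact: IH.
Qed.

Lemma dle_split D (a b : nat) u v :
  dle adj D (a + b) u v -> exists w, dle adj D a u w /\ dle adj D b w v.
Proof.
elim: b v => [|b IH] v; first by rewrite addn0 => H; exists v.
rewrite addnS /= => [[z [zD [/IH [w [Huw Hwz]] Hzv]]]].
by exists w; split => //; exists z.
Qed.

Lemma dle_sym k x y : symmetric adj -> dle adj setT k x y -> dle adj setT k y x.
Proof.
move=> Hsym; elim: k y => [|k IH] y /=; first by move=> ->.
case=> z [_ [/IH Hzx Hzy]].
have Hyz : dle adj setT 1 y z.
  exists y; split; first by rewrite inE.
  by split => //; case: Hzy => [->|Hadj]; [left|right; rewrite Hsym].
exact: dle_concat Hyz Hzx.
Qed.

Lemma dle_from_ball D k x y :
  (forall y j, (j <= k)%N -> dle adj setT j x y -> y \in D) ->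
  dle adj setT k x y -> dle adj D k x y.
Proof.
elim: k y => [|k IH] y Hball //= [z [_ [Hxz Hzy]]].
exists z; split; first exact: (Hball z k (leqnSn k)).
split => //; apply: IH => // y' j jk; apply: Hball; exact: leq_trans jk (leqnSn k).
Qed.

Lemma dle_to_ball D k w v :
  (forall y j, (j <= k)%N -> dle adj setT j y v -> y \in D) ->
  dle adj setT k w v -> dle adj D k w v.
Proof.
elim: k v => [|k IH] v Hball //= [z [_ [Hwz Hzv]]].
exists z; split.
  by apply: (Hball z 1%N) => //; exists z; split; [rewrite inE|].
split => //; apply: IH => // y j jk Hyz; apply: (Hball y j.+1) => //.
by exists z; split; [rewrite inE|].
Qed.

(* Locality: an r-local formula evaluated at x only sees the r-ball around x,
   so it has the same truth value in any sub-domain containing that ball. *)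
Lemma lsat_local (lab : nat -> {set V}) D r x :
  (forall y j, (j <= r)%N -> dle adj setT j x y -> y \in D) ->
  forall f env, lsat adj lab D r x env f <-> lsat adj lab setT r x env f.
Proof.
move=> Hball; elim=> [||t u|t u|c t|g IH|g IHg h IHh|g IHg h IHh|g IH|g IH] env //=.
- by split=> Hn Hg; apply: Hn; apply/IH.
- by rewrite IHg IHh.
- by rewrite IHg IHh.
- split; case=> y [yD [dy Hy]]; exists y.
    by split; [rewrite inE|split; [exact: dle_sub (subsetT D) dy|apply/IH]].
  split; first exact: (Hball y r (leqnn r)).
  by split; [exact: dle_from_ball|apply/IH].
- split=> Hall y yD dy.
    by apply/IH; apply: Hall; [exact: (Hball y r (leqnn r))|exact: dle_from_ball].
  by apply/IH; apply: Hall; [rewrite inE|exact: dle_sub (subsetT D) dy].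
Qed.

End Distance.

Section Residues.
Variables (w : nat) (Hw : (0 < w)%N).

Lemma modz_lt (z : int) : (absz (z %% w%:Z)%Z < w)%N.
Proof.
have h1 : 0 <= (z %% w%:Z)%Z by apply: modz_ge0; lia.
have h2 : (z %% w%:Z)%Z < w%:Z by apply: ltz_pmod; lia.
lia.
Qed.

Definition residue (z : int) : 'I_w := Ordinal (modz_lt z).

Lemma residue_block (c : nat) (a : int) (n : 'I_w) :
  (forall t : 'I_c, n != residue (a - (t : nat)%:Z)) ->
  n%:Z + ((a - n%:Z) %/ w%:Z)%Z * w%:Z + c%:Z <= a /\
  a <= n%:Z + ((a - n%:Z) %/ w%:Z)%Z * w%:Z + w%:Z - 1.
Proof.
move=> Havoid; set q := ((a - n%:Z) %/ w%:Z)%Z.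
have e : a - n%:Z = q * w%:Z + ((a - n%:Z) %% w%:Z)%Z := divz_eq _ _.
set t := ((a - n%:Z) %% w%:Z)%Z in e.
have t0 : 0 <= t by apply: modz_ge0; lia.
have tw : t < w%:Z by apply: ltz_pmod; lia.
case: (boolP (t < c%:Z)) => tc; last by rewrite -leNgt in tc; split; lia.
have tnc : (absz t < c)%N by lia.
have /negP[] := Havoid (Ordinal tnc); apply/eqP/val_inj => /=.
have -> : a - (absz t)%:Z = q * w%:Z + n%:Z by lia.
by rewrite modzMDl modz_small //; apply/andP; split; [|have := ltn_ord n; lia].
Qed.

End Residues.

Lemma block_unique (w q q' c b : int) : 0 < w ->
  c + q * w <= b -> b <= c + q * w + w - 1 ->
  c + q' * w <= b -> b <= c + q' * w + w - 1 -> q = q'.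
Proof. move=> *; nia. Qed.

Lemma sum_count_mem (s : seq int) (c : int) :
  (\sum_(q <- s) (c == q : nat))%N = count_mem c s.
Proof. by elim: s => [|x s IH]; rewrite ?big_nil ?big_cons //= IH eq_sym. Qed.

Lemma plan_of_counts (T : finType) (f : T -> int) (A : {set T}) (e : nat) :
  is_plan (#|A| + e)
    (fun q => #|[set x in A | f x == q]| + (q == 0%R) * e)%N.
Proof.
set s := undup (0%R :: [seq f x | x <- enum A]).
exists s; split; first exact: undup_uniq.
split.
  move=> q; rewrite mem_undup inE negb_or => /andP [q0 qn].
  rewrite (negbTE q0) mul0n addn0; apply/eqP; rewrite cards_eq0; apply/eqP/setP => x.
  rewrite !inE; apply/negP => /andP [xA /eqP fx].
  by move: qn; rewrite -fx map_f // mem_enum.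
rewrite big_split /=; congr (_ + _)%N; last first.
  rewrite -big_distrl /= (eq_bigr (fun q => (0%R == q : nat))) => [|q _]; last by rewrite eq_sym.
  by rewrite sum_count_mem count_uniq_mem ?undup_uniq // mem_undup mem_head mul1n.
transitivity (\sum_(q <- s) \sum_(x in A) (f x == q : nat))%N.
  apply: eq_bigr => q _; rewrite -sum1_card.
  rewrite (eq_bigl (fun x => (x \in A) && (f x == q))) => [|x]; last by rewrite !inE.
  by rewrite big_mkcondr /=; apply: eq_bigr => x _; case: (f x == q).
rewrite exchange_big /= -sum1_card; apply: eq_bigr => x xA.
rewrite (eq_bigr (fun q => (f x == q : nat))) // sum_count_mem count_uniq_mem ?undup_uniq //.
by rewrite mem_undup inE map_f ?orbT // mem_enum.
Qed.

Lemma exists_max_card (T : finType) (P : {set T} -> Prop) :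
  P set0 -> exists X, P X /\ forall S, P S -> (#|S| <= #|X|)%N.
Proof.
move=> P0; apply: NNPP => Hnone.
have Hgrow X : P X -> exists S, P S /\ (#|X| < #|S|)%N.
  move=> PX; apply: NNPP => Hn; apply: Hnone; exists X; split => // S PS.
  by rewrite leqNgt; apply/negP => lt; apply: Hn; exists S.
have Hbig k : exists X, P X /\ (k <= #|X|)%N.
  elim: k => [|k [X [PX kX]]]; first by exists set0.
  have [S [PS lt]] := Hgrow X PX; exists S; split => //; exact: leq_ltn_trans kX lt.
have [X [_ lt]] := Hbig #|T|.+1.
by have := max_card X; rewrite leqNgt lt.
Qed.

Section Covers.
Variables (V : finType) (adj : rel V) (lab : nat -> {set V}).
Hypothesis Hsym : symmetric adj.
Variables (lam : V -> int) (r' r l : nat) (psi : lform).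
Hypothesis Hlam : layering adj lam.
Hypothesis Hr : (r' <= r)%N.
Hypothesis Hrl : (2 * r < l)%N.

Local Notation w := (l - 2 * r)%N.
Let Hw : (0 < w)%N := etrans (subn_gt0 (2 * r) l) Hrl.

Definition cover_good (ex : bool) (m n : nat) : Prop :=
  exists p : int -> nat, is_plan m p /\
    forall q : int,
      let i := n%:Z + q * w%:Z in
      variant_sat adj lab (layer_set lam i l 0) (layer_set lam i l (2 * r))
        (layer_set lam i l r) ex r' psi (p q).

Lemma dle_layer (D : {set V}) (k : nat) (x y : V) :
  dle adj D k x y -> `|lam y - lam x| <= k%:Z.
Proof.
elim: k y => [|k IH] y /=; first by move=> ->; lia.
by case=> z [_ [/IH Hxz [<-|/Hlam Hzy]]]; lia.
Qed.

Lemma layer_set_mono (i : int) (d d' : nat) :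
  (d <= d')%N -> layer_set lam i l d' \subset layer_set lam i l d.
Proof.
by move=> dd'; apply/subsetP => x; rewrite !inE => /andP [h1 h2]; apply/andP; split; lia.
Qed.

Lemma near_layer_set (i : int) (d k : nat) (x y : V) :
  (k <= d)%N -> x \in layer_set lam i l d ->
  `|lam y - lam x| <= k%:Z -> y \in layer_set lam i l 0.
Proof. by move=> kd; rewrite !inE => /andP [h1 h2] h3; apply/andP; split; lia. Qed.

Lemma core_sat_window (i : int) (x : V) : x \in layer_set lam i l r ->
  core_sat adj lab (layer_set lam i l 0) r' psi x <-> core_sat adj lab setT r' psi x.
Proof.
move=> xM; apply: lsat_local => y j jr /dle_layer Hd.
exact: near_layer_set (leq_trans jr Hr) xM Hd.
Qed.

Lemma dle_window (i : int) (u v : V) :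
  u \in layer_set lam i l r -> v \in layer_set lam i l r ->
  dle adj setT (2 * r') u v -> dle adj (layer_set lam i l 0) (2 * r') u v.
Proof.
move=> uM vM; rewrite mul2n -addnn => /dle_split [z [Huz Hzv]].
apply: dle_concat.
  apply: dle_from_ball Huz => y j jr /dle_layer Hd.
  exact: near_layer_set (leq_trans jr Hr) uM Hd.
apply: dle_to_ball Hzv => y j jr /dle_layer Hd.
by apply: near_layer_set (leq_trans jr Hr) vM _; rewrite distrC.
Qed.

Definition block_of (d n : nat) (x : V) : int := ((lam x + d%:Z - n%:Z) %/ w%:Z)%Z.

(* The covers n in which, for some x in X, the layer lam x + d is among the
   2r + 2d first ones of its block, i.e. x lies outside M_(2r+d) of its
   interval; there are at most #|X| (2r + 2d) of them. *)
Definition bad_covers (d : nat) (X : {set V}) : {set 'I_w} :=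
  [set residue Hw (lam xt.1 + d%:Z - (xt.2 : nat)%:Z)
    | xt : V * 'I_(2 * r + 2 * d) in setX X [set: 'I_(2 * r + 2 * d)]].

Lemma bad_covers_card (d : nat) (X : {set V}) :
  (#|bad_covers d X| <= #|X| * (2 * r + 2 * d))%N.
Proof. by apply: leq_trans (leq_imset_card _ _) _; rewrite cardsX cardsT card_ord. Qed.

Lemma in_middle (d : nat) (X : {set V}) (n : 'I_w) (x : V) :
  n \notin bad_covers d X -> x \in X ->
  x \in layer_set lam (n%:Z + block_of d n x * w%:Z) l (2 * r + d).
Proof.
move=> nB xX; have [] := @residue_block _ Hw (2 * r + 2 * d) (lam x + d%:Z) n.
  move=> t; apply: contra nB => /eqP ->.
  by apply/imsetP; exists (x, t); rewrite ?inE ?xX.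
by rewrite inE /block_of => h1 h2; apply/andP; split; lia.
Qed.

Lemma far_from_other_interval (n : nat) (q q' : int) (x y : V) :
  x \in layer_set lam (n%:Z + q' * w%:Z) l (2 * r + r) ->
  y \in layer_set lam (n%:Z + q * w%:Z) l r ->
  `|lam y - lam x| <= (2 * r)%:Z -> q = q'.
Proof.
rewrite !inE => /andP [x1 x2] /andP [y1 y2] Hd.
apply: (@block_unique w%:Z _ _ (n%:Z + r%:Z) (lam y)); lia.
Qed.

Definition scattered (S : {set V}) : Prop :=
  forall u v, u \in S -> v \in S -> u != v -> ~ dle adj setT (2 * r') u v.

Definition block_plan (m d n : nat) (X : {set V}) (q : int) : nat :=
  (#|[set x in X | block_of d n x == q]| + (q == 0%R) * (m - #|X|))%N.

Lemma block_plan_is_plan (m d n : nat) (X : {set V}) :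
  (#|X| <= m)%N -> is_plan m (block_plan m d n X).
Proof. by move=> Xm; have := plan_of_counts (block_of d n) X (m - #|X|); rewrite subnKC. Qed.

Lemma existential_witnesses (m : nat) : basic_sat adj lab setT true m r' psi ->
  exists X : {set V}, #|X| = m /\ scattered X /\
    forall x, x \in X -> core_sat adj lab setT r' psi x.
Proof.
case=> xs [_ [xs_far xs_psi]].
have far_ne i j : i != j -> ~ dle adj setT (2 * r') (xs i) (xs j).
  move=> ne; case: (ltngtP i j) => [lt|lt|eq_ij]; first exact: xs_far.
    by move/(dle_sym Hsym); exact: xs_far.
  by move: ne; rewrite (val_inj eq_ij) eqxx.
have xs_inj : injective xs.
  move=> i j E; apply/eqP; apply: contraT => /far_ne; rewrite E.
  by case; exact: dle_refl (in_setT _).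
exists (xs @: setT); split; first by rewrite card_imset // cardsT card_ord.
split; last by move=> x /imsetP [i _ ->].
move=> _ _ /imsetP [i _ ->] /imsetP [j _ ->] ne; apply: far_ne.
by apply: contraNneq ne => ->.
Qed.

Lemma existential_cover_good (m : nat) (X : {set V}) (n : 'I_w) :
  #|X| = m -> scattered X -> (forall x, x \in X -> core_sat adj lab setT r' psi x) ->
  n \notin bad_covers 0 X -> cover_good true m n.
Proof.
move=> cardX Xsc Xpsi nB; exists (block_plan m 0 n X).
split; first by apply: block_plan_is_plan; rewrite cardX.
move=> q /=; rewrite /block_plan cardX subnn muln0 addn0.
set Xq := [set x in X | block_of 0 n x == q].
have XqX (t : 'I_#|Xq|) : enum_val t \in X.
  by have := enum_valP t; rewrite inE => /andP [].
have XqC (t : 'I_#|Xq|) : enum_val t \in layer_set lam (n%:Z + q * w%:Z) l (2 * r).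
  have := enum_valP t; rewrite inE => /andP [xX /eqP <-].
  by have := in_middle nB xX; rewrite addn0.
have XqM (t : 'I_#|Xq|) : enum_val t \in layer_set lam (n%:Z + q * w%:Z) l r.
  by apply: (subsetP (layer_set_mono _ _)) (XqC t); lia.
exists (fun t => enum_val t); split; [|split].
- by move=> t; apply: (subsetP (layer_set_mono _ (leq0n r))) (XqM t).
- move=> t1 t2 lt12 /(dle_sub (subsetT _)); apply: Xsc; rewrite ?XqX //.
  by apply: contraTneq lt12 => /enum_val_inj ->; rewrite ltnn.
- move=> t; split; first exact: XqC.
  by apply/(core_sat_window (XqM t)); exact: Xpsi (XqX t).
Qed.

Definition bad_scattered (S : {set V}) : Prop :=
  (forall v, v \in S -> ~ core_sat adj lab setT r' psi v) /\ scattered S.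

Lemma bad_scattered_sub (S T : {set V}) :
  S \subset T -> bad_scattered T -> bad_scattered S.
Proof.
move=> /subsetP sST [TN Tsc]; split => [v /sST|u v /sST uT /sST vT]; [exact: TN|exact: Tsc].
Qed.

Lemma bad_scattered_union (S T : {set V}) : bad_scattered S -> bad_scattered T ->
  (forall u v, u \in S -> v \in T -> (2 * r')%:Z < `|lam v - lam u|) ->
  bad_scattered (S :|: T).
Proof.
move=> [SN Ssc] [TN Tsc] ST; split.
  by move=> v; rewrite inE => /orP [/SN|/TN].
have cross u v : u \in S -> v \in T ->
    ~ dle adj setT (2 * r') u v /\ ~ dle adj setT (2 * r') v u.
  by move=> uS vT; have := ST u v uS vT; split => /dle_layer; lia.
move=> u v; rewrite !inE => /orP [uS|uT] /orP [vS|vT] ne.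
- exact: Ssc.
- exact: (cross u v uS vT).1.
- exact: (cross v u vS uT).2.
- exact: Tsc.
Qed.

Lemma universal_witnesses (m : nat) : basic_sat adj lab setT false m r' psi ->
  exists X : {set V}, bad_scattered X /\ (#|X| <= m)%N /\
    forall S, bad_scattered S -> (#|S| <= #|X|)%N.
Proof.
move=> HG; have P0 : bad_scattered set0 by split => [v|u v]; rewrite inE.
have [X [[XN Xsc] Xmax]] := exists_max_card P0.
exists X; split => //; split => //; rewrite leqNgt; apply/negP => Hlt.
pose xs (t : 'I_m.+1) := enum_val (widen_ord Hlt t).
have xsX t : xs t \in X by apply: enum_valP.
have [|t] := HG xs (fun _ => in_setT _); last exact: XN (xsX t).
move=> t1 t2 lt12; apply: Xsc; rewrite ?xsX //.
by apply/negP => /eqP /enum_val_inj /(congr1 val) /= E; rewrite E ltnn in lt12.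
Qed.

(* In a good cover, if k + 1 far vertices of M in interval q all failed psi,
   swapping them for the elements of X in interval q would give a larger
   scattered set of non-psi vertices than the maximal X. *)
Lemma universal_cover_good (m : nat) (X : {set V}) (n : 'I_w) :
  bad_scattered X -> (#|X| <= m)%N -> (forall S, bad_scattered S -> (#|S| <= #|X|)%N) ->
  n \notin bad_covers r X -> cover_good false m n.
Proof.
move=> Xbad Xm Xmax nB; exists (block_plan m r n X).
split; first exact: block_plan_is_plan.
move=> q /=; set Xq := [set x in X | block_of r n x == q].
have kXq : (#|Xq| <= block_plan m r n X q)%N by rewrite /block_plan leq_addr.
move=> ys yD yM yfar; apply: NNPP => Hnone.
have yinj : injective ys.
  move=> t1 t2 E; apply/eqP; apply: contraT => ne.
  case: (ltngtP t1 t2) => [lt|lt|/val_inj eq_t]; last by rewrite eq_t eqxx in ne.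
  - by case: (yfar _ _ lt); rewrite E; exact: dle_refl (yD t2).
  - by case: (yfar _ _ lt); rewrite E; exact: dle_refl (yD t2).
have Ybad : bad_scattered (ys @: setT).
  split.
    move=> _ /imsetP [t _ ->] Hc; apply: Hnone; exists t.
    exact/(core_sat_window (yM t)).
  move=> _ _ /imsetP [s1 _ ->] /imsetP [s2 _ ->] ne Hd.
  case: (ltngtP s1 s2) => [lt|lt|/val_inj eq_t]; last by rewrite eq_t eqxx in ne.
  - exact: yfar lt (dle_window (yM s1) (yM s2) Hd).
  - exact: yfar lt (dle_window (yM s2) (yM s1) (dle_sym Hsym Hd)).
have XqX : Xq \subset X by apply/subsetP => x; rewrite inE => /andP [].
have Yfar u v : u \in ys @: setT -> v \in X :\: Xq -> (2 * r')%:Z < `|lam v - lam u|.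
  case/imsetP => t _ ->; rewrite in_setD inE => /andP [vq vX].
  rewrite ltNge; apply: contra vq => Hd; rewrite vX /=; apply/eqP/esym.
  by apply: far_from_other_interval (in_middle nB vX) (yM t) _; lia.
have YX0 : ys @: setT :&: (X :\: Xq) = set0.
  apply/setP => v; rewrite in_set0; apply/negP => /setIP [vY vX].
  by have := Yfar v v vY vX; rewrite subrr normr0; lia.
have := Xmax _ (bad_scattered_union Ybad (bad_scattered_sub (subsetDl X Xq) Xbad) Yfar).
rewrite cardsU YX0 cards0 subn0 card_imset // cardsT card_ord cardsD (setIidPr XqX).
by have := subset_leq_card XqX; lia.
Qed.

Lemma few_bad_covers (ex : bool) (m : nat) : basic_sat adj lab setT ex m r' psi ->
  exists B : {set 'I_w}, (#|B| <= 4 * r * m)%N /\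
    forall n : 'I_w, n \notin B -> cover_good ex m n.
Proof.
case: ex => HG.
- have [X [cardX [Xsc Xpsi]]] := existential_witnesses HG.
  exists (bad_covers 0 X); split; last by move=> n; exact: existential_cover_good.
  by apply: leq_trans (bad_covers_card 0 X) _; rewrite cardX; nia.
- have [X [Xbad [Xm Xmax]]] := universal_witnesses HG.
  exists (bad_covers r X); split; last by move=> n; exact: universal_cover_good.
  by apply: leq_trans (bad_covers_card r X) _; nia.
Qed.

End Covers.

Unset Implicit Arguments.

Theorem mainTheorem14 (ex : bool) (m r' : nat) (psi : lform)
    (V : finType) (adj : rel V) (lab : nat -> {set V})
    (Hsym : symmetric adj) (Hirr : irreflexive adj)
    (HG : basic_sat adj lab [set: V] ex m r' psi)
    (lam : V -> int) (Hlam : layering adj lam)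
    (r l : nat) (Hr : (r' <= r)%N) (Hl : (2 * r * (3 * m + 1) < l)%N) :
  exists B : {set 'I_(l - 2 * r)}, (#|B| <= 6 * r * m)%N /\
    forall n : 'I_(l - 2 * r), n \notin B ->
      exists p : int -> nat, is_plan m p /\
        forall q : int,
          let i := (nat_of_ord n)%:Z + q * (l - 2 * r)%:Z in
          variant_sat adj lab (layer_set lam i l 0) (layer_set lam i l (2 * r))
            (layer_set lam i l r) ex r' psi (p q).
Proof.
have Hrl : (2 * r < l)%N by nia.
have [B [Bcard Bgood]] := few_bad_covers Hsym Hlam Hr Hrl HG.
exists B; split; first by apply: leq_trans Bcard _; nia.
exact: Bgood.
Qed.
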